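(* Let $n\geq5$ and let $U,V$ be monomials. Then $U,V\in F(J(P_{n-3})^2)$ if and only if both $x_n^2x_{n-2}^2U$ and $x_n^2x_{n-2}^2V$ belong to $F(J(P_n)^2)$. Moreover, in that case $U>_{\mathcal R}V$ (rooted order on $F(J(P_{n-3})^2)$) if and only if $x_n^2x_{n-2}^2U>_{\mathcal R}x_n^2x_{n-2}^2V$ (rooted order on $F(J(P_n)^2)$).
   Context: Let $K$ be a field. For $m\geq 1$, $P_m$ is the path graph on vertices $x_1,\ldots,x_m$ with edges $\{x_i,x_{i+1}\}$. The cover ideal $J(P_m)$ is generated by the monomials $\prod_{x\in C}x$ with $C$ a minimal vertex cover of $P_m$. For a monomial ideal $I$, $G(I)$ is its set of minimal monomial generators and $F(I^2)=\{uv:u,v\in G(I)\}$. The rooted list $\mathcal R(P_m)$ is defined recursively: $\mathcal R(P_1)$ empty; $\mathcal R(P_2)=x_1,x_2$; $\mathcal R(P_3)=x_2,x_1x_3$; $\mathcal R(P_4)=x_1x_3,x_2x_3,x_2x_4$; for $m\geq5$, if $\mathcal R(P_{m-2})=u_1,\ldots,u_r$ and $\mathcal R(P_{m-3})=v_1,\ldots,v_s$, then $\mathcal R(P_m)=x_{m-1}u_1,\ldots,x_{m-1}u_r,x_mx_{m-2}v_1,\ldots,x_mx_{m-2}v_s$; it lists each element of $G(J(P_m))$ once. With $\mathcal R(P_m)=u_1,\ldots,u_q$, each $M\in F(J(P_m)^2)$ can be written $u_1^{a_1}\cdots u_q^{a_q}$ with $a_i\geq0$, $\sum a_i=2$; the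 maximal expression of $M$ is the one with lexicographically largest exponent vector. The rooted order on $F(J(P_m)^2)$: $M>_{\mathcal R}N$ iff the exponent vector of the maximal expression of $M$ is lexicographically larger than that of $N$. *)

From mathcomp Require Import all_boot.
Set Implicit Arguments. Unset Strict Implicit. Unset Printing Implicit Defensive.

(* A monomial of K[x_1, x_2, ...] is represented by its exponent function:
   e i = exponent of x_i (index 0 is not a variable). The field K plays no
   role for monomials. *)
Definition mono := nat -> nat.

Definition is_monomial (u : mono) : Prop :=
  u 0 = 0 /\ exists N, forall i, N < i -> u i = 0.

Definition mone : mono := fun _ => 0.
Definition mmul (u v : mono) : mono := fun i => u i + v i.
Definition mpow (u : mono) (k : nat) : mono := fun i => k * u i.
Definition var (i : nat) : mono := fun j => if j == i then 1 else 0.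
Definition mdivides (u w : mono) : Prop := forall i, u i <= w i.

(* vertex covers of the path P_m on x_1..x_m, as boolean predicates on indices *)
Definition vcover (m : nat) (C : nat -> bool) : Prop :=
  (forall i, C i -> (1 <= i <= m)) /\ (forall i, 1 <= i < m -> C i || C i.+1).
Definition min_vcover (m : nat) (C : nat -> bool) : Prop :=
  vcover m C /\
  forall C', vcover m C' -> (forall i, C' i -> C i) -> forall i, C i -> C' i.
Definition cover_mono (C : nat -> bool) : mono := fun i => if C i then 1 else 0.

(* monomials of the cover ideal J(P_m): divisible by some generator prod_{x in C} x *)
Definition in_J (m : nat) (w : mono) : Prop :=
  exists C, min_vcover m C /\ mdivides (cover_mono C) w.
Definition in_GJ (m : nat) (u : mono) : Prop :=
  in_J m u /\ forall w, in_J m w -> mdivides w u -> w = u.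
Definition inF (m : nat) (M : mono) : Prop :=
  exists u v, in_GJ m u /\ in_GJ m v /\ M = mmul u v.

Fixpoint rooted (m : nat) : seq mono :=
  match m with
  | 0 | 1 => [::]
  | 2 => [:: var 1; var 2]
  | 3 => [:: var 2; mmul (var 1) (var 3)]
  | 4 => [:: mmul (var 1) (var 3); mmul (var 2) (var 3); mmul (var 2) (var 4)]
  | S (S ((S m3) as m2)) as k =>
      map (mmul (var k.-1)) (rooted m2) ++
      map (mmul (mmul (var k) (var k.-2))) (rooted m3)
  end.

Definition expr_val (R : seq mono) (a : seq nat) : mono :=
  fun j => \sum_(i < size R) nth 0 a i * nth mone R i j.
Definition is_expr (R : seq mono) (M : mono) (a : seq nat) : Prop :=
  size a = size R /\ sumn a = 2 /\ expr_val R a = M.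

Definition lex_lt (a b : seq nat) : Prop :=
  exists k, k < size a /\ take k a = take k b /\ nth 0 a k < nth 0 b k.

Definition is_max_expr (R : seq mono) (M : mono) (a : seq nat) : Prop :=
  is_expr R M a /\ forall b, is_expr R M b -> ~ lex_lt a b.

Definition rooted_gt (m : nat) (M N : mono) : Prop :=
  exists a b, is_max_expr (rooted m) M a /\ is_max_expr (rooted m) N b /\
              lex_lt b a.

Definition lift3 (n : nat) (U : mono) : mono :=
  mmul (mmul (mpow (var n) 2) (mpow (var (n - 2)) 2)) U.

(* Write n = k + 3.  A minimal vertex cover of P_n containing x_{k+1} and x_{k+3}
   omits x_{k+2} by minimality, so these covers are exactly the minimal covers of
   P_k enlarged by x_{k+1} and x_{k+3}; since x_{k+1}^2 x_{k+3}^2 divides a product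
   of two generators only if both generators contain x_{k+1} x_{k+3}, this gives
   the first equivalence.  In R(P_n) the tail block is x_{k+3} x_{k+1} R(P_k) and
   no other element involves x_{k+3}, so every expression of x_{k+3}^2 x_{k+1}^2 U
   puts all its exponent mass on the tail block: the expressions of the lifted
   monomial are those of U padded with zeros, and padding preserves the
   lexicographic order. *)

From mathcomp Require Import all_boot zify.
From Stdlib Require Import FunctionalExtensionality.

Set Implicit Arguments.
Unset Strict Implicit.

Lemma varE i j : var i j = (j == i).
Proof. by rewrite /var; case: eqP. Qed.

Lemma cover_monoE C j : cover_mono C j = C j.
Proof. by rewrite /cover_mono; case: (C j). Qed.

Lemma lift3E k U j : lift3 k.+3 U j = 2 * (j == k.+3) + 2 * (j == k.+1) + U j.
Proof. by rewrite /lift3 /mmul /mpow !varE !subSS subn0. Qed.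

Lemma in_GJ_cover m u :
  in_GJ m u <-> exists2 C, min_vcover m C & u = cover_mono C.
Proof.
split.
- move=> [[C [minC divC]] minu]; exists C => //.
  by symmetry; apply: minu => //; exists C; split => // i.
- move=> [C minC ->]; split; first by exists C; split => // i.
  move=> w [C' [minC' divC']] divw.
  have subC : forall i, C' i -> C i.
    by move=> i C'i; have := divC' i; have := divw i; rewrite !cover_monoE C'i; lia.
  have supC := minC.2 C' minC'.1 subC.
  apply: functional_extensionality => i.
  have := divC' i; have := divw i; rewrite !cover_monoE.
  by have := supC i; have := subC i; case: (C i); case: (C' i); lia.
Qed.

Lemma min_vcover_last m C : min_vcover m.+1 C -> C m.+1 -> ~~ C m.
Proof.
move=> [[inC edgeC] minC] Clast; apply/negP => Cm.
pose C' i := C i && (i != m.+1).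
have coverC' : vcover m.+1 C'.
  split=> [i /andP[/inC]//|i Hi]; rewrite /C'.
  by case: (eqVneq i m) => [->|ne]; [rewrite Cm; lia | have := edgeC i Hi; lia].
have subC' : forall i, C' i -> C i by move=> i /andP[].
have := minC C' coverC' subC' m.+1 Clast.
by rewrite /C' eqxx andbF.
Qed.

Definition lift3_cover k (D : nat -> bool) : nat -> bool :=
  fun i => D i || (i == k.+1) || (i == k.+3).

Definition trunc_cover k (C : nat -> bool) : nat -> bool := fun i => C i && (i <= k).

Lemma cover_mono_lift3 k D j : vcover k D ->
  cover_mono (lift3_cover k D) j = D j + (j == k.+1) + (j == k.+3).
Proof. by move=> [inD _]; rewrite !cover_monoE /lift3_cover; have := inD j; lia. Qed.

Lemma vcover_lift3 k D : vcover k D -> vcover k.+3 (lift3_cover k D).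
Proof.
move=> [inD edgeD]; split=> [i|i Hi]; rewrite /lift3_cover.
- by have := inD i; lia.
- by have := edgeD i; have := inD i; have := inD i.+1; lia.
Qed.

Lemma min_vcover_lift3 k D : min_vcover k D -> min_vcover k.+3 (lift3_cover k D).
Proof.
move=> [[inD edgeD] minD]; split; first exact: vcover_lift3.
move=> C' [inC' edgeC'] subC'.
have notC'2 : ~~ C' k.+2.
  by apply/negP => /subC'; rewrite /lift3_cover; have := inD k.+2; lia.
have C'1 : C' k.+1 by have := edgeC' k.+1; lia.
have C'3 : C' k.+3 by have := edgeC' k.+2; lia.
have coverT : vcover k (trunc_cover k C').
  split=> [i|i Hi]; rewrite /trunc_cover; first by have := inC' i; lia.
  by have := edgeC' i; lia.
have subT : forall i, trunc_cover k C' i -> D i.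
  by move=> i /andP[/subC']; rewrite /lift3_cover; lia.
have supT := minD _ coverT subT.
by move=> i /orP[/orP[/supT/andP[]//|/eqP->]|/eqP->].
Qed.

Lemma min_vcover_trunc k C : min_vcover k.+3 C -> C k.+1 -> C k.+3 ->
  min_vcover k (trunc_cover k C).
Proof.
move=> [[inC edgeC] minC] C1 C3; split.
  split=> [i|i Hi]; rewrite /trunc_cover; first by have := inC i; lia.
  by have := edgeC i; lia.
move=> D' coverD' subD' i /andP[Ci ik].
have subL : forall i, lift3_cover k D' i -> C i.
  by move=> j /orP[/orP[/subD'/andP[]//|/eqP->]|/eqP->].
by have := minC _ (vcover_lift3 coverD') subL i Ci; rewrite /lift3_cover; lia.
Qed.

Lemma lift3_trunc_cover k C : min_vcover k.+3 C -> C k.+1 -> C k.+3 ->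
  lift3_cover k (trunc_cover k C) = C.
Proof.
move=> minC C1 C3; have notC2 := min_vcover_last minC C3.
apply: functional_extensionality => i; rewrite /lift3_cover /trunc_cover /=.
have [ik|ki] := leqP i k; first by rewrite andbT; lia.
have inC := minC.1.1 i; rewrite andbF /=.
have : i = k.+1 \/ i = k.+2 \/ i = k.+3 \/ k.+3 < i by lia.
by case=> [->|[->|[->|gti]]]; rewrite ?eqxx ?orbT //; lia.
Qed.

Lemma lift3_cover_mul k D1 D2 U : vcover k D1 -> vcover k D2 ->
  lift3 k.+3 U = mmul (cover_mono (lift3_cover k D1)) (cover_mono (lift3_cover k D2))
  <-> U = mmul (cover_mono D1) (cover_mono D2).
Proof.
move=> coverD1 coverD2; split=> E; apply: functional_extensionality => j;
  have := congr1 (fun f => f j) E; rewrite /mmul lift3E !cover_mono_lift3 //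
  !cover_monoE; have := coverD1.1 j; have := coverD2.1 j; lia.
Qed.

Lemma in_GJ_lift3 k D : min_vcover k D -> in_GJ k.+3 (cover_mono (lift3_cover k D)).
Proof.
by move=> minD; apply/in_GJ_cover; exists (lift3_cover k D) => //; apply: min_vcover_lift3.
Qed.

Lemma inF_lift3 k U : inF k U <-> inF k.+3 (lift3 k.+3 U).
Proof.
split.
- move=> [_ [_ [/in_GJ_cover [D1 minD1 ->] [/in_GJ_cover [D2 minD2 ->] E]]]].
  exists (cover_mono (lift3_cover k D1)), (cover_mono (lift3_cover k D2)).
  split; [exact: in_GJ_lift3 | split; [exact: in_GJ_lift3 |]].
  exact/(lift3_cover_mul _ minD1.1 minD2.1).
- move=> [_ [_ [/in_GJ_cover [C1 minC1 ->] [/in_GJ_cover [C2 minC2 ->] E]]]].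
  have coefE j : 2 * (j == k.+3) + 2 * (j == k.+1) + U j = C1 j + C2 j.
    by have := congr1 (fun f => f j) E; rewrite lift3E /mmul !cover_monoE.
  have C11 : C1 k.+1 by have := coefE k.+1; lia.
  have C13 : C1 k.+3 by have := coefE k.+3; lia.
  have C21 : C2 k.+1 by have := coefE k.+1; lia.
  have C23 : C2 k.+3 by have := coefE k.+3; lia.
  have minT1 := min_vcover_trunc minC1 C11 C13.
  have minT2 := min_vcover_trunc minC2 C21 C23.
  rewrite -(lift3_trunc_cover minC1) // -(lift3_trunc_cover minC2) // in E.
  exists (cover_mono (trunc_cover k C1)), (cover_mono (trunc_cover k C2)).
  split; [by apply/in_GJ_cover; exists (trunc_cover k C1) | split].
    by apply/in_GJ_cover; exists (trunc_cover k C2).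
  exact/(lift3_cover_mul _ minT1.1 minT2.1).
Qed.

Lemma rooted_rec k : 2 <= k ->
  rooted k.+3 = map (mmul (var k.+2)) (rooted k.+1)
                ++ map (mmul (mmul (var k.+3) (var k.+1))) (rooted k).
Proof. by case: k => [|[|k]]. Qed.

Lemma nth_map_mmul w (s : seq mono) i j :
  nth mone (map (mmul w) s) i j = if i < size s then w j + nth mone s i j else 0.
Proof.
by case: ifP => lti; [rewrite (nth_map mone) | rewrite nth_default // size_map leqNgt lti].
Qed.

Lemma rooted_supp m i j : m < j -> nth mone (rooted m) i j = 0.
Proof.
elim/ltn_ind: m i j => m IH i j ltmj.
case: m IH ltmj => [|[|[|[|[|k]]]]] IH ltmj; last first.
  rewrite -[k.+4.+1]/(k.+2.+3) rooted_rec // nth_cat size_map.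
  by case: ifP => _; rewrite nth_map_mmul; case: ifP => // _;
    rewrite /mmul !varE IH //; lia.
all: by case: i => [|[|[|i]]]; rewrite /= ?nth_nil /mone ?/mmul ?varE; lia.
Qed.

Lemma expr_val_cat R1 R2 a1 a2 j : size a1 = size R1 ->
  expr_val (R1 ++ R2) (a1 ++ a2) j = expr_val R1 a1 j + expr_val R2 a2 j.
Proof.
move=> size_a1; rewrite /expr_val size_cat big_split_ord /=.
congr (_ + _); apply: eq_bigr => i _; rewrite !nth_cat size_a1.
- by rewrite ltn_ord.
- by rewrite ltnNge leq_addr /= addKn.
Qed.

Lemma expr_val_map_mmul w R a j : size a = size R ->
  expr_val (map (mmul w) R) a j = sumn a * w j + expr_val R a j.
Proof.
move=> size_a; rewrite /expr_val size_map.
have -> : sumn a = \sum_(i < size R) nth 0 a i.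
  by rewrite -size_a sumnE (big_nth 0) big_mkord.
rewrite big_distrl -big_split; apply: eq_bigr => i _.
by rewrite (nth_map mone) // /mmul mulnDr.
Qed.

Lemma expr_val_nseq0 R r j : expr_val R (nseq r 0) j = 0.
Proof. by rewrite /expr_val big1 // => i _; rewrite nth_nseq; case: ifP. Qed.

Lemma expr_val_eq0 R a j : (forall i, nth mone R i j = 0) -> expr_val R a j = 0.
Proof. by move=> R_j; rewrite /expr_val big1 // => i _; rewrite R_j muln0. Qed.

Lemma lex_lt_catl c a b : lex_lt (c ++ a) (c ++ b) <-> lex_lt a b.
Proof.
split=> [[i [lti [take_ab nth_ab]]]|[i [lti [take_ab nth_ab]]]].
- have [ltic|leci] := ltnP i (size c); first by rewrite !nth_cat ltic ltnn in nth_ab.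
  have geic : (i < size c) = false by rewrite ltnNge leci.
  rewrite !take_cat !nth_cat geic in take_ab nth_ab.
  exists (i - size c); split; first by rewrite size_cat in lti; lia.
  by split=> //; have := congr1 (drop (size c)) take_ab; rewrite !drop_size_cat.
- have geic : (size c + i < size c) = false by lia.
  exists (size c + i); rewrite size_cat ltn_add2l !take_cat !nth_cat geic addKn.
  by rewrite take_ab.
Qed.

Definition expr_gt (R : seq mono) (M N : mono) : Prop :=
  exists a b, is_max_expr R M a /\ is_max_expr R N b /\ lex_lt b a.

Section PaddedExpressions.

Variables (R1 R2 : seq mono) (w : mono) (j0 : nat).
Hypotheses (R1_j0 : forall i, nth mone R1 i j0 = 0)
           (R2_j0 : forall i, nth mone R2 i j0 = 0) (w_j0 : w j0 = 1).

Let R := R1 ++ map (mmul w) R2.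
Let pad a := nseq (size R1) 0 ++ a.

Lemma is_expr_pad U A :
  is_expr R (mmul (mpow w 2) U) A <-> exists2 a, A = pad a & is_expr R2 U a.
Proof.
split.
- move=> [size_A [sum_A val_A]].
  rewrite -(cat_take_drop (size R1) A) in sum_A val_A *.
  set A1 := take _ A in sum_A val_A *; set A2 := drop _ A in sum_A val_A *.
  have size_A1 : size A1 = size R1.
    by rewrite size_take size_A size_cat size_map; case: ifP; lia.
  have size_A2 : size A2 = size R2 by rewrite size_drop size_A size_cat size_map; lia.
  have coefE j : expr_val R1 A1 j + (sumn A2 * w j + expr_val R2 A2 j) = 2 * w j + U j.
    by rewrite -expr_val_map_mmul // -expr_val_cat // val_A.
  (* At x_{j0} only the w-block contributes, with its total mass sumn A2. *)
  have := coefE j0; rewrite !expr_val_eq0 // w_j0 sumn_cat in sum_A * => coef_j0.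
  have /natnseq0P A1E : sumn A1 == 0 by apply/eqP; lia.
  exists A2; first by rewrite /pad A1E size_A1.
  split=> //; split; first lia.
  apply: functional_extensionality => j.
  by have := coefE j; rewrite A1E expr_val_nseq0; lia.
- move=> [a -> [size_a [sum_a val_a]]].
  split; first by rewrite !size_cat size_nseq size_a size_map.
  split; first by rewrite sumn_cat sumn_nseq sum_a.
  apply: functional_extensionality => j.
  by rewrite expr_val_cat ?size_nseq // expr_val_nseq0 expr_val_map_mmul // sum_a val_a.
Qed.

Lemma is_max_expr_pad U A :
  is_max_expr R (mmul (mpow w 2) U) A <-> exists2 a, A = pad a & is_max_expr R2 U a.
Proof.
split.
- move=> [/is_expr_pad [a -> expr_a] max_a]; exists a => //; split=> // b expr_b lt_ab.
  by apply: (max_a (pad b)); [apply/is_expr_pad; exists b | apply/lex_lt_catl].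
- move=> [a -> [expr_a max_a]]; split; first by apply/is_expr_pad; exists a.
  by move=> _ /is_expr_pad [b -> expr_b] /lex_lt_catl; apply: max_a.
Qed.

Lemma expr_gt_pad U V :
  expr_gt R2 U V <-> expr_gt R (mmul (mpow w 2) U) (mmul (mpow w 2) V).
Proof.
split.
- move=> [a [b [max_a [max_b lt_ba]]]]; exists (pad a), (pad b).
  split; first by apply/is_max_expr_pad; exists a.
  by split; [apply/is_max_expr_pad; exists b | apply/lex_lt_catl].
- move=> [_ [_ [/is_max_expr_pad [a -> max_a] [/is_max_expr_pad [b -> max_b]]]]].
  by move=> /lex_lt_catl lt_ba; exists a, b.
Qed.

End PaddedExpressions.

Lemma lift3_sq k U : lift3 k.+3 U = mmul (mpow (mmul (var k.+3) (var k.+1)) 2) U.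
Proof.
by apply: functional_extensionality => j; rewrite lift3E /mmul /mpow !varE; lia.
Qed.

Lemma rooted_gt_lift3 k U V : 2 <= k ->
  rooted_gt k U V <-> rooted_gt k.+3 (lift3 k.+3 U) (lift3 k.+3 V).
Proof.
move=> le2k; rewrite /rooted_gt rooted_rec // !lift3_sq.
apply: (@expr_gt_pad _ _ _ k.+3) => [i|i|].
- by rewrite nth_map_mmul varE rooted_supp; [case: ifP; lia | lia].
- by rewrite rooted_supp; lia.
- by rewrite /mmul !varE eqxx gtn_eqF.
Qed.

Theorem lemma3p4 (n : nat) (U V : mono) :
  5 <= n -> is_monomial U -> is_monomial V ->
  ((inF (n - 3) U /\ inF (n - 3) V) <-> (inF n (lift3 n U) /\ inF n (lift3 n V))) /\
  (inF (n - 3) U -> inF (n - 3) V ->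
     (rooted_gt (n - 3) U V <-> rooted_gt n (lift3 n U) (lift3 n V))).
Proof.
case: n => [|[|[|k]]] // le5n _ _; rewrite !subSS subn0.
split; first by rewrite (inF_lift3 k U) (inF_lift3 k V).
by move=> _ _; apply: rooted_gt_lift3; lia.
Qed.
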